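(* For all $n\ge1$, $p_{0,n}<\phi$, where $\phi=(1+\sqrt5)/2$.
   Context: $\Phi$ is the partial map of $\mathbb{R}^2$ defined for $p\ne0$ by $\Phi(p,u)=\bigl(p^2(u+1)-1,\ 1/p\bigr)$. For $n\ge1$, the trajectory $T_n$ is the (existing and unique) finite sequence $(p_{j,n},u_{j,n})$, $j=0,\dots,n$, with $(p_{j,n},u_{j,n})=\Phi(p_{j-1,n},u_{j-1,n})$ for $1\le j\le n$, $u_{0,n}=0$, $p_{n,n}=0$, and $p_{j,n}>0$ for $0\le j\le n-1$. *)

From Stdlib Require Import Reals.
Open Scope R_scope.

Definition Phi (x : R * R) : R * R :=
  let (p, u) := x in (p ^ 2 * (u + 1) - 1, 1 / p).

(* is_trajectory n pu : the finite sequence (pu j), j = 0..n, is the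
   trajectory T_n: it follows Phi, u_{0,n} = 0, p_{n,n} = 0 and
   p_{j,n} > 0 for 0 <= j <= n-1 (so Phi is always applied at p <> 0). *)
Definition is_trajectory (n : nat) (pu : nat -> R * R) : Prop :=
  (forall j, (1 <= j <= n)%nat -> pu j = Phi (pu (j - 1)%nat)) /\
  snd (pu 0%nat) = 0 /\
  fst (pu n) = 0 /\
  (forall j, (j <= n - 1)%nat -> fst (pu j) > 0).

Definition golden : R := (1 + sqrt 5) / 2.

(* If p >= phi then p^2 - 1 >= p, so the first application of Phi (where
   u = 0) does not decrease p.  The property "p >= 1 and Phi does not
   decrease p" is invariant under Phi: writing p' >= p for the new first
   coordinate, the next one is p'^2 / p + p'^2 - 1 >= p'.  Hence p_{j,n} >= 1
   along the whole trajectory, contradicting p_{n,n} = 0. *)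

From Stdlib Require Import Reals Lra Lia Psatz.
Open Scope R_scope.

Definition Phi_nondecreasing (x : R * R) : Prop := 1 <= fst x <= fst (Phi x).

Lemma golden_sqr : golden ^ 2 = golden + 1.
Proof.
  unfold golden.
  assert (Hsqrt5 : sqrt 5 * sqrt 5 = 5) by (apply sqrt_sqrt; lra).
  nra.
Qed.

Lemma golden_gt_1 : 1 < golden.
Proof.
  unfold golden.
  assert (Hsqrt5 : 1 < sqrt 5) by (rewrite <- sqrt_1; apply sqrt_lt_1; lra).
  lra.
Qed.

Lemma Phi_nondecreasing_start (p : R) : golden <= p -> Phi_nondecreasing (p, 0).
Proof.
  intros Hp. unfold Phi_nondecreasing. cbn [Phi fst snd].
  pose proof golden_sqr as Hsqr. pose proof golden_gt_1 as Hgt.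
  (* by golden_sqr, p^2 - p - 1 = (p - golden) (p + golden - 1) *)
  split; nra.
Qed.

Lemma Phi_nondecreasing_step (x : R * R) :
  Phi_nondecreasing x -> Phi_nondecreasing (Phi x).
Proof.
  destruct x as [p u]. unfold Phi_nondecreasing. cbn [Phi fst snd].
  set (p' := p ^ 2 * (u + 1) - 1). intros [Hp1 Hpp'].
  assert (Hdiv : p' <= p' ^ 2 * (1 / p)).
  { apply (Rmult_le_reg_r p); [lra|].
    replace (p' ^ 2 * (1 / p) * p) with (p' * p') by (field; lra). nra. }
  split; nra.
Qed.

Lemma Phi_nondecreasing_orbit (n : nat) (pu : nat -> R * R) :
  (forall j, (1 <= j <= n)%nat -> pu j = Phi (pu (j - 1)%nat)) ->
  Phi_nondecreasing (pu 0%nat) ->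
  forall j, (j <= n)%nat -> Phi_nondecreasing (pu j).
Proof.
  intros Hstep H0 j. induction j as [|j IH]; intros Hj; [exact H0|].
  rewrite (Hstep (S j)) by lia. simpl. rewrite Nat.sub_0_r.
  apply Phi_nondecreasing_step, IH. lia.
Qed.

Theorem lemma6 (n : nat) (pu : nat -> R * R) :
  (1 <= n)%nat -> is_trajectory n pu -> fst (pu 0%nat) < golden.
Proof.
  intros _ [Hstep [Hu0 [Hpn _]]].
  apply Rnot_le_lt. intros Hge.
  assert (Hstart : Phi_nondecreasing (pu 0%nat)).
  { rewrite (surjective_pairing (pu 0%nat)), Hu0.
    now apply Phi_nondecreasing_start. }
  destruct (Phi_nondecreasing_orbit n pu Hstep Hstart n (le_n n)) as [Hn _].
  lra.
Qed.
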